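(* Let $\mathcal C$ be an $(n,k,r,t)$-SLRC and let $G$ be a minimal repair graph of $\mathcal C$ with source set $S(G)$. Then for every $E\subseteq[n]$ with $|E|\le t$, $$|\mathrm{Out}(E)|\ge|E\cap S(G)|.$$
   Context: For an $[n,k]$ linear code $\mathcal C$ over a finite field $\mathbb F$, a recovering set of $i\in[n]$ is a set $R\subseteq[n]\setminus\{i\}$ with nonzero $a_j\in\mathbb F$ such that $x_i=\sum_{j\in R}a_jx_j$ for all $x\in\mathcal C$; standing assumption: recovering sets have size $2\le|R|\le r<k$. $\mathcal C$ is an $(n,k,r,t)$-SLRC if every $E\subseteq[n]$ with $|E|\le t$ can be indexed $\{i_1,\dots,i_{|E|}\}$ so that each $i_\ell$ has a recovering set $R_\ell\subseteq([n]\setminus E)\cup\{i_1,\dots,i_{\ell-1}\}$. A repair graph of $\mathcal C$ is a directed acyclic graph on vertex set $[n]$ such that for every vertex $i$ with nonempty in-neighbourhood $\mathrm{In}(i)$, $\mathrm{In}(i)$ is a recovering set of $i$. A source is a vertex with no in-neighbours; $S(G)$ is the set of sources. A minimal repair graph is a repair graph whose number of sources is minimum among all repair graphs of $\mathcal C$. $\mathrm{Out}(v)$ is the set of out-neighbours of $v$, and for $E\subseteq[n]$, $\mathrm{Out}(E)=\bigcup_{v\in E}\mathrm{Out}(v)\setminus E$. *)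

From HB Require Import structures.
From mathcomp Require Import all_boot all_order all_algebra.
Set Implicit Arguments. Unset Strict Implicit. Unset Printing Implicit Defensive.
Import GRing.Theory.
Local Open Scope ring_scope.

(* A linear [n,k] code over a finite field F is a subspace C of F^n = 'rV[F]_n
   with \dim C = k.  Coordinates are indexed by 'I_n (i.e. [n] = {0,...,n-1}). *)

Definition recovering_set (F : fieldType) (n r : nat) (C : {vspace 'rV[F]_n})
    (i : 'I_n) (R : {set 'I_n}) : Prop :=
  [/\ i \notin R, (2 <= #|R|)%N, (#|R| <= r)%N &
   exists a : 'I_n -> F,
     (forall j, j \in R -> a j != 0) /\
     (forall x, x \in C -> x 0 i = \sum_(j in R) a j * x 0 j)].

Definition SLRC (F : fieldType) (n k r t : nat) (C : {vspace 'rV[F]_n}) : Prop :=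
  [/\ \dim C = k, (r < k)%N &
   forall E : {set 'I_n}, (#|E| <= t)%N ->
     exists s : seq 'I_n,
       [/\ uniq s, [set:: s] = E &
        forall (s1 s2 : seq 'I_n) (i : 'I_n), s = s1 ++ i :: s2 ->
          exists R : {set 'I_n},
            recovering_set r C i R /\ R \subset (~: E) :|: [set:: s1]]].

Definition In_nb (n : nat) (e : rel 'I_n) (i : 'I_n) : {set 'I_n} :=
  [set j | e j i].
Definition Out_nb (n : nat) (e : rel 'I_n) (v : 'I_n) : {set 'I_n} :=
  [set j | e v j].
Definition OutSet (n : nat) (e : rel 'I_n) (E : {set 'I_n}) : {set 'I_n} :=
  (\bigcup_(v in E) Out_nb e v) :\: E.
Definition sources (n : nat) (e : rel 'I_n) : {set 'I_n} :=
  [set i | In_nb e i == set0].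

(* acyclic: no directed cycle (including loops) *)
Definition dag_acyclic (n : nat) (e : rel 'I_n) : Prop :=
  forall u v, e u v -> ~~ connect e v u.

Definition repair_graph (F : fieldType) (n r : nat) (C : {vspace 'rV[F]_n})
    (e : rel 'I_n) : Prop :=
  dag_acyclic e /\
 forall i, In_nb e i != set0 -> recovering_set r C i (In_nb e i).

Definition minimal_repair_graph (F : fieldType) (n r : nat)
    (C : {vspace 'rV[F]_n}) (e : rel 'I_n) : Prop :=
  repair_graph r C e /\
  forall e' : rel 'I_n, repair_graph r C e' -> (#|sources e| <= #|sources e'|)%N.

From HB Require Import structures.
From mathcomp Require Import all_boot all_order all_algebra.

Set Implicit Arguments.
Unset Strict Implicit.
Unset Printing Implicit Defensive.

(* Given a minimal repair graph G and an erasure pattern E, build a new repair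
   graph G' by giving every vertex of E the in-neighbourhood of a recovering set
   supplied by the sequential recovery of E (ordered so that no cycle arises),
   turning every vertex of Out(E) into a source, and keeping G elsewhere.  The
   sources of G' lie in (S(G) \ E) u Out(E), so minimality of G gives
   |S(G)| <= |S(G) \ E| + |Out(E)|, i.e. |E n S(G)| <= |Out(E)|. *)

Lemma connect_ind_l (T : finType) (e : rel T) (P : T -> T -> Prop) :
    (forall x, P x x) ->
    (forall x y z, e x y -> connect e y z -> P y z -> P x z) ->
  forall x z, connect e x z -> P x z.
Proof.
move=> Prefl Pstep x z /connectP [p]; elim: p x => [|y p IHp] x /=.
  by move=> _ ->.
move=> /andP [exy py] zl; apply: Pstep exy _ (IHp y py zl).
by apply/connectP; exists p.
Qed.

Section SequentialRecovery.

Variables (F : fieldType) (n k r t : nat) (C : {vspace 'rV[F]_n}).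

Lemma SLRC_ranked_recovery (E : {set 'I_n}) :
    SLRC k r t C -> #|E| <= t ->
  exists (rank : 'I_n -> nat) (R : 'I_n -> {set 'I_n}),
    (forall i, i \in E -> recovering_set r C i (R i)) /\
    (forall i j, i \in E -> j \in R i -> j \in E -> rank j < rank i).
Proof.
move=> [_ _ hseq] hE; have [s [_ sE hrec]] := hseq E hE.
suff /fin_all_exists [R hR] : forall i, exists R : {set 'I_n}, i \in E ->
    recovering_set r C i R /\ R \subset ~: E :|: [set:: take (index i s) s].
  exists (index^~ s), R; split=> [i /hR [] //|i j /hR [_ /subsetP sub] jR jE].
  by apply: index_ltn; move: (sub j jR); rewrite !inE jE.
move=> i; have [iE|] := boolP (i \in E); last by exists set0.
have i_s : i \in s by rewrite -sE inE in iE.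
have split_s : s = take (index i s) s ++ i :: drop (index i s).+1 s.
  by rewrite -[X in _ ++ X :: _](nth_index i i_s) -drop_nth ?index_mem // cat_take_drop.
by have [R hR] := hrec _ _ _ split_s; exists R.
Qed.

End SequentialRecovery.

Section PatchedRepairGraph.

Variables (F : fieldType) (n r : nat) (C : {vspace 'rV[F]_n}).
Variables (e : rel 'I_n) (E : {set 'I_n}) (R : 'I_n -> {set 'I_n}).
Variable rank : 'I_n -> nat.

Hypothesis e_repair : repair_graph r C e.
Hypothesis R_recovering : forall i, i \in E -> recovering_set r C i (R i).
Hypothesis R_rank : forall i j, i \in E -> j \in R i -> j \in E -> rank j < rank i.

Definition patch_graph : rel 'I_n :=
  fun u v => if v \in E then u \in R v else (v \notin OutSet e E) && e u v.

Lemma mem_OutSet u v : u \in E -> v \notin E -> e u v -> v \in OutSet e E.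
Proof.
move=> uE vE euv; rewrite inE vE /=.
by apply/bigcupP; exists u; rewrite // inE.
Qed.

Lemma patch_graph_from_E u v :
  patch_graph u v -> u \in E -> v \in E /\ rank u < rank v.
Proof.
rewrite /patch_graph; have [vE uR uE|vE /andP [vO euv] uE] := boolP (v \in E).
  by split; last exact: R_rank.
by rewrite (mem_OutSet uE vE euv) in vO.
Qed.

Lemma patch_graph_outside u v : patch_graph u v -> v \notin E -> e u v.
Proof. by rewrite /patch_graph => + /negbTE vE; rewrite vE => /andP []. Qed.

Lemma connect_patch_graph_from_E x z :
  connect patch_graph x z -> x \in E -> z \in E /\ rank x <= rank z.
Proof.
move: x z; apply: connect_ind_l => // x y z /patch_graph_from_E exy _ IHyz xE.
have [yE lt_xy] := exy xE; have [zE le_yz] := IHyz yE.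
by split; last exact: ltnW (leq_trans lt_xy le_yz).
Qed.

Lemma connect_patch_graph_outside x z :
  connect patch_graph x z -> x \notin E -> z \notin E -> connect e x z.
Proof.
move: x z; apply: connect_ind_l => [x _ _|x y z exy cyz IHyz _ zE]; first exact: connect0.
have [yE|yE] := boolP (y \in E).
  by rewrite (proj1 (connect_patch_graph_from_E cyz yE)) in zE.
exact: connect_trans (connect1 (patch_graph_outside exy yE)) (IHyz yE zE).
Qed.

(* Edges leaving E stay in E and increase the rank, so a cycle avoids E and is
   then a cycle of e. *)
Lemma patch_graph_acyclic : dag_acyclic patch_graph.
Proof.
move=> u v euv; apply/negP => cvu.
have [uE|uE] := boolP (u \in E).
  have [vE lt_uv] := patch_graph_from_E euv uE.
  have [_ le_vu] := connect_patch_graph_from_E cvu vE.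
  by have := leq_ltn_trans le_vu lt_uv; rewrite ltnn.
have [vE|vE] := boolP (v \in E).
  by rewrite (proj1 (connect_patch_graph_from_E cvu vE)) in uE.
have [e_acyclic _] := e_repair.
have /negP := e_acyclic _ _ (patch_graph_outside euv vE); apply.
exact: connect_patch_graph_outside.
Qed.

Lemma In_nb_patch_graph i :
  In_nb patch_graph i =
  if i \in E then R i else if i \in OutSet e E then set0 else In_nb e i.
Proof.
apply/setP => j; rewrite [LHS]inE /patch_graph.
by case: (i \in E); case: (i \in OutSet e E); rewrite ?inE.
Qed.

Lemma patch_repair_graph : repair_graph r C patch_graph.
Proof.
split=> [|i]; first exact: patch_graph_acyclic.
have [_ e_rec] := e_repair; rewrite In_nb_patch_graph.
case: ifP => [iE _|_]; first exact: R_recovering.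
by case: ifP => [_|_ /e_rec]; rewrite ?eqxx.
Qed.

Lemma sources_patch_graph :
  sources patch_graph \subset (sources e :\: E) :|: OutSet e E.
Proof.
apply/subsetP => i; rewrite [i \in sources _]inE In_nb_patch_graph.
have [iE /eqP R0|iE] := boolP (i \in E).
  by have [_ + _ _] := R_recovering iE; rewrite R0 cards0.
rewrite in_setU; case: (i \in OutSet e E) => [|srcE]; rewrite ?orbT // orbF.
by rewrite in_setD iE inE.
Qed.

End PatchedRepairGraph.

Theorem lemma5 (F : finFieldType) (n k r t : nat) (C : {vspace 'rV[F]_n})
    (e : rel 'I_n) :
  SLRC k r t C -> minimal_repair_graph r C e ->
  forall E : {set 'I_n}, (#|E| <= t)%N ->
    (#|E :&: sources e| <= #|OutSet e E|)%N.
Proof.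
move=> hC [e_repair e_min] E hE.
have [rank [R [R_recovering R_rank]]] := SLRC_ranked_recovery hC hE.
have e'_repair := patch_repair_graph e_repair R_recovering R_rank.
have le_sources : #|sources e| <= #|sources e :\: E| + #|OutSet e E|.
  apply: leq_trans (e_min _ e'_repair) _.
  exact: leq_trans (subset_leq_card (sources_patch_graph e R_recovering))
                   (leq_card_setU _ _).
by rewrite setIC -(leq_add2r #|sources e :\: E|) cardsID addnC.
Qed.
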